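(* Let $w,s,t$ be positive integers with $t\mid s$ and $t\ne s$, and suppose $2\mid s/t$ but $4\nmid s/t$. For $l\in I\big(s/(2t)\big)$ set $$f(l)=\sum_{k\in\{l,\;2l\}}(-1)^{\omega(s/(kt))}(-1)^{ktw}\binom{k(tw-1)-1}{k-1}.$$ Then $f(l)\equiv0\pmod 4$ for every $l\in I\big(s/(2t)\big)$.
   Context: For a positive integer $n$, $\omega(n)$ is the number of distinct primes dividing $n$, and $I(n)=\{k\in\mathbb{N}: k\mid n \text{ and } n/k \text{ is square-free}\}$. Binomial coefficients $\binom{n}{m}$ with $n\in\mathbb{Z}$, $m\ge0$ mean $n(n-1)\cdots(n-m+1)/m!$. *)

From mathcomp Require Import all_boot all_order all_algebra.
Import GRing.Theory Num.Theory.
Local Open Scope ring_scope.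

Definition omega (n : nat) : nat := size (primes n).

Definition squarefree (n : nat) : bool :=
  (0 < n)%N && all (fun p => (logn p n <= 1)%N) (primes n).

Definition inI (n k : nat) : bool :=
  [&& (0 < k)%N, (k %| n)%N & squarefree (n %/ k)].

Definition gbinom (n : int) (m : nat) : rat :=
  (\prod_(i < m) ((n - (i : nat)%:Z)%:~R : rat)) / (m`!)%:R.

Definition fterm (s t w k : nat) : rat :=
  (-1) ^+ omega (s %/ (k * t)) * (-1) ^+ (k * t * w)
  * gbinom ((k%:Z * ((t * w)%:Z - 1)) - 1) (k.-1).

Definition f (s t w l : nat) : rat := fterm s t w l + fterm s t w (2 * l).

From mathcomp Require Import all_boot all_order all_algebra.
From mathcomp Require Import ring.
Import GRing.Theory Num.Theory.
Local Open Scope ring_scope.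

(* Put c = t w.  As s/(2t) is odd, l and r = s/(2lt) are odd, and the two signs
   (-1)^omega combine so that f(l) = +-(C(2l(c-1)-1, 2l-1) - (-1)^c C(l(c-1)-1, l-1)).
   For c = 1 both upper indices are -1 and the bracket vanishes.  Otherwise, with
   N = l(c-1) - 1 >= 0, the bracket is C(2N+1, 2l-1) - (-1)^N C(N, l-1), which is
   divisible by 4 thanks to the congruences mod 4
     C(2n, 2k) = C(n, k),   C(2n, 2k+1) = 2(k+1) C(n, k+1),
   proved jointly by induction on n with Pascal's rule. *)

Lemma bin_double_mod4 n k :
  (4 %| 'C(n.*2, k.*2)%:Z - 'C(n, k)%:Z)%Z /\
  (4 %| 'C(n.*2, k.*2.+1)%:Z - 2 * k.+1%:Z * 'C(n, k.+1)%:Z)%Z.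
Proof.
elim: n k => [|n IHn] k.
  by rewrite double0 !bin0n double_eq0 subrr; split; rewrite //= mulr0 dvdz0.
rewrite doubleS; case: k => [|k].
  have [_ od_0] := IHn 0; split; first by rewrite !bin0 subrr dvdz0.
  apply: (eq_ind _ (fun x => 4 %| x)%Z od_0).
  by rewrite /= !binS !bin0 !PoszD; ring.
have [ev_k od_k] := IHn k; have [ev_k1 od_k1] := IHn k.+1.
rewrite doubleS in ev_k1 od_k1 *; rewrite !binS; split.
  apply: (eq_ind _ (fun x => 4 %| x)%Z (rpredD (rpredD (rpredD ev_k ev_k1)
    (dvdz_mull 2 od_k)) (dvdz_mulr (k.+1%:Z * 'C(n, k.+1)) (dvdzz 4)))).
  rewrite !PoszD; ring.
apply: (eq_ind _ (fun x => 4 %| x)%Z (rpredD (rpredD od_k od_k1) (dvdz_mull 2 ev_k1))).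
rewrite !PoszD; ring.
Qed.

Lemma even_bin_double_odd m k : (2 %| 'C(m.*2, k.*2.+1)%:Z)%Z.
Proof.
have [_ od] := bin_double_mod4 m k.
have -> : 'C(m.*2, k.*2.+1)%:Z = ('C(m.*2, k.*2.+1)%:Z - 2 * k.+1%:Z * 'C(m, k.+1)%:Z)
  + 2 * (k.+1%:Z * 'C(m, k.+1)%:Z) by ring.
by rewrite rpredD ?dvdz_mulr // (dvdz_trans _ od).
Qed.

Lemma bin_double_succ_mod4 n j : ~~ odd j ->
  (4 %| 'C(n.*2.+1, j.*2.+1)%:Z - (-1) ^+ n * 'C(n, j)%:Z)%Z.
Proof.
move=> /even_halfK; set i := j./2 => <-.
have [ev od] := bin_double_mod4 n i.*2.
have double_succZ : i.*2.+1%:Z = 2 * i%:Z + 1 by rewrite -addn1 -mul2n PoszD PoszM.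
have twice_even x : (2 %| x)%Z -> (4 %| 2 * x)%Z.
  by move=> /dvdzP[q ->]; rewrite mulrCA dvdz_mull.
rewrite binS PoszD -signr_odd; case: (boolP (odd n)) => [n_odd | n_even] /=.
  have := even_bin_double_odd n.+1./2 i.
  rewrite (even_halfK (n := n.+1)) /= ?n_odd // => even_bin.
  apply: (eq_ind _ (fun x => 4 %| x)%Z (rpredD (rpredD (rpredD ev od)
    (twice_even _ even_bin)) (dvdz_mulr (i%:Z * 'C(n, i.*2.+1)) (dvdzz 4)))).
  rewrite binS PoszD double_succZ expr1; ring.
have := even_bin_double_odd n./2 i; rewrite even_halfK // => even_bin.
apply: (eq_ind _ (fun x => 4 %| x)%Z (rpredD (rpredD ev od)
  (dvdz_mull i.*2.+1%:Z (twice_even _ even_bin)))).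
rewrite expr0 double_succZ; ring.
Qed.

Lemma gbinom_nat (n m : nat) : gbinom n%:Z m = 'C(n, m)%:R.
Proof.
have ffact : \prod_(i < m) ((n%:Z - i%:Z)%:~R : rat) = (n ^_ m)%:R.
  elim: m => [|m IHm]; first by rewrite big_ord0 ffactn0.
  rewrite big_ord_recr /= IHm ffactnSr natrM.
  by case: (leqP m n) => [/subzn -> | /ffact_small ->]; rewrite ?mul0r.
rewrite /gbinom ffact -bin_ffact natrM mulfK //.
by rewrite pnatr_eq0 -lt0n fact_gt0.
Qed.

Lemma gbinomN1 (m : nat) : gbinom (-1) m = (-1) ^+ m.
Proof.
have fact_sign : \prod_(i < m) ((-1 - i%:Z)%:~R : rat) = (-1) ^+ m * m`!%:R.
  elim: m => [|m IHm]; first by rewrite big_ord0 expr0 mul1r.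
  rewrite big_ord_recr /= IHm factS natrM exprS rmorphB /= rmorphN1.
  by rewrite -natr1 -[m%:~R]/(m%:R : rat); ring.
rewrite /gbinom fact_sign mulfK //.
by rewrite pnatr_eq0 -lt0n fact_gt0.
Qed.

Lemma intr_dvdz (R : pzRingType) {d : nat} {e : int} :
  (d%:Z %| e)%Z -> exists z : int, e%:~R = d%:R * z%:~R :> R.
Proof. by move=> /dvdzP[z ->]; exists z; rewrite mulrC rmorphM. Qed.

Lemma gbinom_double_mod4 {l c : nat} : odd l -> (0 < c)%N ->
  exists z : int, gbinom ((2 * l)%:Z * (c%:Z - 1) - 1) (2 * l).-1
    - (-1) ^+ c * gbinom (l%:Z * (c%:Z - 1) - 1) l.-1 = 4%:R * z%:~R.
Proof.
have predZ k : k.+1%:Z - 1 = k by rewrite intS addrC addKr.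
case: l => // j; rewrite oddS => j_even; case: c => // a _.
rewrite predZ mul2n doubleS /=.
case: a => [|a].
  exists 0; rewrite !mulr0 !sub0r !gbinomN1 -(signr_odd _ j) -(signr_odd _ j.*2.+1).
  by rewrite /= odd_double (negbTE j_even) /=; ring.
have [n n_eq] : exists n, (j.+1 * a.+1)%N = n.+1 by exists (j.+1 * a.+1).-1.
have sign_a : (-1) ^+ a.+2 = (-1) ^+ n :> rat.
  have : (-1) ^+ n.+1 = (-1) ^+ a.+1 :> rat.
    by rewrite -n_eq -signr_odd oddM /= (negbTE j_even) /= -oddS signr_odd.
  by move=> sign_n; rewrite exprS -sign_n exprS; ring.
have n2_eq : (j.*2.+2 * a.+1 = n.*2.+2)%N by rewrite -!doubleS -doubleMl n_eq.
rewrite -!PoszM n_eq n2_eq !predZ !gbinom_nat sign_a.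
have [z ez] := intr_dvdz rat (bin_double_succ_mod4 n _ j_even).
by exists z; rewrite -ez rmorphB rmorphM rmorphXn rmorphN1.
Qed.

Lemma omega_double_odd r : odd r -> omega (2 * r) = (omega r).+1.
Proof.
move=> r_odd; have r_gt0 : (0 < r)%N by case: r r_odd.
rewrite /omega -[(size (primes r)).+1]/(size (2 :: primes r)).
apply: perm_size; apply: uniq_perm => [||p]; first exact: primes_uniq.
  by rewrite /= primes_uniq andbT mem_primes dvdn2 r_odd !andbF.
by rewrite in_cons primesM // primes_prime // mem_seq1.
Qed.

Lemma f_oddE s t w l r : odd l -> odd r ->
  (s %/ (l * t) = 2 * r)%N -> (s %/ (2 * l * t) = r)%N ->
  f s t w l = (-1) ^+ omega r *
    (gbinom ((2 * l)%:Z * ((t * w)%:Z - 1) - 1) (2 * l).-1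
     - (-1) ^+ (t * w) * gbinom (l%:Z * ((t * w)%:Z - 1) - 1) l.-1).
Proof.
move=> l_odd r_odd div_l div_2l.
have sign_l : (-1) ^+ (l * t * w) = (-1) ^+ (t * w) :> rat.
  by rewrite -mulnA -signr_odd oddM l_odd signr_odd.
have sign_2l : (-1) ^+ (2 * l * t * w) = 1 :> rat.
  by rewrite -!mulnA -signr_odd oddM.
rewrite /f /fterm div_l div_2l omega_double_odd // sign_l sign_2l exprS; ring.
Qed.

Theorem lemma3p4 (w s t : nat) :
  (0 < w)%N -> (0 < s)%N -> (0 < t)%N ->
  (t %| s)%N -> t <> s ->
  (2 %| s %/ t)%N -> ~~ (4 %| s %/ t)%N ->
  forall l : nat, inI (s %/ (2 * t)) l ->
  exists z : int, f s t w l = 4%:R * z%:~R.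
Proof.
move=> w_gt0 _ t_gt0 t_dvd_s _ q_even q_not4 l /and3P[l_gt0 l_dvd_p _].
set q := (s %/ t)%N in q_even q_not4; set p := (q %/ 2)%N.
have q_eq : q = (2 * p)%N by rewrite mulnC divnK.
have p_odd : odd p.
  by move: q_not4; rewrite q_eq -[4%N]/(2 * 2)%N dvdn_pmul2l // dvdn2 negbK.
rewrite mulnC divnMA -/q -/p in l_dvd_p; have [r p_eq] := dvdnP l_dvd_p.
have /andP[r_odd l_odd] : odd r && odd l by rewrite -oddM -p_eq.
have s_eq : s = (2 * r * (l * t))%N by rewrite -(divnK t_dvd_s) -/q q_eq p_eq; ring.
have div_l : (s %/ (l * t) = 2 * r)%N by rewrite s_eq mulnK // muln_gt0 l_gt0.
have div_2l : (s %/ (2 * l * t) = r)%N.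
  by rewrite (_ : s = r * (2 * l * t))%N ?mulnK ?muln_gt0 ?l_gt0 // s_eq; ring.
have tw_gt0 : (0 < t * w)%N by rewrite muln_gt0 t_gt0.
have [z ez] := gbinom_double_mod4 l_odd tw_gt0.
exists ((-1) ^+ omega r * z).
by rewrite (f_oddE _ _ _ _ r) // ez intrM rmorph_sign mulrCA.
Qed.
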